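(* Let $(E,\langle\cdot,\cdot\rangle,\rho)$ be a Courant vector bundle over $M$ and let $\circ$ and $\tilde\circ$ be two pre-Courant algebroid structures on it, with associated Leibniz 2-algebras $\mathbb E$ and $\tilde{\mathbb E}$. Then $\mathbb E$ and $\tilde{\mathbb E}$ are isomorphic.
   Context: A Courant vector bundle over a smooth manifold $M$ is a vector bundle $E\to M$ with a fibrewise nondegenerate symmetric bilinear form $\langle\cdot,\cdot\rangle$ and a bundle map $\rho:E\to TM$ such that $\rho\circ\rho^*=0$, where $\rho^*:T^*M\to E^*\cong E$ is the dual of $\rho$ followed by the identification $E^*\cong E$ via $\langle\cdot,\cdot\rangle$. A pre-Courant algebroid structure on it is an $\mathbb R$-bilinear operation $\circ$ on $\Gamma(E)$ such that for all $e_1,e_2,e_3\in\Gamma(E)$: (i) $\rho(e_1\circ e_2)=[\rho(e_1),\rho(e_2)]$; (ii) $\langle e_1\circ e_1,e_2\rangle=\frac12\rho(e_2)\langle e_1,e_1\rangle$; (iii) $\rho(e_1)\langle e_2,e_3\rangle=\langle e_1\circ e_2,e_3\rangle+\langle e_2,e_1\circ e_3\rangle$. Its Jacobiator is $J(e_1,e_2,e_3)=e_1\circ(e_2\circ e_3)-(e_1\circ e_2)\circ e_3-e_2\circ(e_1\circ e_3)$. A Leibniz 2-algebra $(V_1\xrightarrow{d}V_0,l_2,l_3)$ consists of a complex of vector spaces, bilinear $l_2:V_i\times V_j\to V_{i+j}$ ($i+j\le1$) and trilinear $l_3:V_0^{3}\to V_1$ such that for all $w,x,y,z\in V_0$, $m,n\in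 V_1$: $d\,l_2(x,m)=l_2(x,dm)$; $d\,l_2(m,x)=l_2(dm,x)$; $l_2(dm,n)=l_2(m,dn)$; $d\,l_3(x,y,z)=l_2(x,l_2(y,z))-l_2(l_2(x,y),z)-l_2(y,l_2(x,z))$; $l_3(x,y,dm)=l_2(x,l_2(y,m))-l_2(l_2(x,y),m)-l_2(y,l_2(x,m))$; $l_3(x,dm,y)=l_2(x,l_2(m,y))-l_2(l_2(x,m),y)-l_2(m,l_2(x,y))$; $l_3(dm,x,y)=l_2(m,l_2(x,y))-l_2(l_2(m,x),y)-l_2(x,l_2(m,y))$; and $l_2(w,l_3(x,y,z))-l_2(x,l_3(w,y,z))+l_2(y,l_3(w,x,z))+l_2(l_3(w,x,y),z)-l_3(l_2(w,x),y,z)-l_3(x,l_2(w,y),z)-l_3(x,y,l_2(w,z))+l_3(w,l_2(x,y),z)+l_3(w,y,l_2(x,z))-l_3(w,x,l_2(y,z))=0$. The Leibniz 2-algebra associated to a pre-Courant algebroid $(E,\langle\cdot,\cdot\rangle,\rho,\circ)$ is $V_1=\Gamma(\operatorname{Ker}\rho)\xrightarrow{i}V_0=\Gamma(E)$ ($i$ the inclusion) with $l_2(e_1,e_2)=e_1\circ e_2$, $l_2(e,\kappa)=e\circ\kappa$, $l_2(\kappa,e)=\kappa\circ e$ for $e,e_1,e_2\in\Gamma(E)$, $\kappa\in\Gamma(\operatorname{Ker}\rho)$, and $l_3=J$. A morphism from $\mathbb V$ to $\mathbb V'$ consists of linear maps $f_0:V_0\to V_0'$, $f_1:V_1\to V_1'$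 with $f_0\circ d=d'\circ f_1$ and a bilinear map $f_2:V_0\times V_0\to V_1'$ such that for all $x,y,z\in V_0$, $m\in V_1$: $l_2'(f_0x,f_0y)-f_0l_2(x,y)=d'f_2(x,y)$; $l_2'(f_0x,f_1m)-f_1l_2(x,m)=f_2(x,dm)$; $l_2'(f_1m,f_0x)-f_1l_2(m,x)=f_2(dm,x)$; and $f_1(l_3(x,y,z))+l_2'(f_0x,f_2(y,z))-l_2'(f_0y,f_2(x,z))-l_2'(f_2(x,y),f_0z)-f_2(l_2(x,y),z)+f_2(x,l_2(y,z))-f_2(y,l_2(x,z))-l_3'(f_0x,f_0y,f_0z)=0$. It is an isomorphism if $f_0$ and $f_1$ are bijective. *)

(* Algebraic (section-level) model of Courant vector
   bundles, pre-Courant algebroids and Leibniz 2-algebras. *)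
From HB Require Import structures.
From mathcomp Require Import all_boot all_order all_algebra.
From mathcomp Require Import reals.
Set Implicit Arguments. Unset Strict Implicit. Unset Printing Implicit Defensive.
Import Order.TTheory GRing.Theory Num.Theory.
Local Open Scope ring_scope.

Definition lin_map (R : realType) (U V : lmodType R) (f : U -> V) :=
  forall (a : R) x y, f (a *: x + y) = a *: f x + f y.

Definition bilin_map (R : realType) (U1 U2 V : lmodType R)
    (f : U1 -> U2 -> V) :=
  (forall y, lin_map (fun x => f x y)) /\ (forall x, lin_map (f x)).

Definition trilin_map (R : realType) (U1 U2 U3 V : lmodType R)
    (f : U1 -> U2 -> U3 -> V) :=
  [/\ forall y z, lin_map (fun x => f x y z),
      forall x z, lin_map (fun y => f x y z) &
      forall x y, lin_map (f x y)].

(*   Fn  = C^oo(M)     Vf = X(M) (vector fields)     Sc = Gamma(E)     *)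
Record courant_vb (R : realType) := CourantVB {
  Fn : comAlgType R;
  Vf : lmodType R;
  Sc : lmodType R;
  vact : Vf -> Fn -> Fn;
  vbr  : Vf -> Vf -> Vf;
  fsV  : Fn -> Vf -> Vf;
  fsS  : Fn -> Sc -> Sc;
  pairing : Sc -> Sc -> Fn;
  rho : Sc -> Vf;
  rhostar_d : Fn -> Sc;             (* f |-> rho^*(df)                      *)
  vact_lin : forall X, lin_map (vact X);
  vact_linV : forall f, lin_map (fun X => vact X f);
  vact_Leibniz : forall X f g, vact X (f * g) = vact X f * g + f * vact X g;
  vact_inj : forall X Y, (forall f, vact X f = vact Y f) -> X = Y;
  vact_fsV : forall f X g, vact (fsV f X) g = f * vact X g;
  vbrE : forall X Y f, vact (vbr X Y) f = vact X (vact Y f) - vact Y (vact X f);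
  fsV1 : forall X, fsV 1 X = X;
  fsVM : forall f g X, fsV (f * g) X = fsV f (fsV g X);
  fsVDl : forall f g X, fsV (f + g) X = fsV f X + fsV g X;
  fsVDr : forall f X Y, fsV f (X + Y) = fsV f X + fsV f Y;
  fsVZ : forall (a : R) X, fsV (a%:A) X = a *: X;
  fsS1 : forall e, fsS 1 e = e;
  fsSM : forall f g e, fsS (f * g) e = fsS f (fsS g e);
  fsSDl : forall f g e, fsS (f + g) e = fsS f e + fsS g e;
  fsSDr : forall f e1 e2, fsS f (e1 + e2) = fsS f e1 + fsS f e2;
  fsSZ : forall (a : R) e, fsS (a%:A) e = a *: e;
  pairing_sym : forall e1 e2, pairing e1 e2 = pairing e2 e1;
  pairingD : forall e1 e2 e3, pairing (e1 + e2) e3 = pairing e1 e3 + pairing e2 e3;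
  pairing_fs : forall f e1 e2, pairing (fsS f e1) e2 = f * pairing e1 e2;
  pairing_nondeg : forall e, (forall e', pairing e e' = 0) -> e = 0;
  rhoD : forall e1 e2, rho (e1 + e2) = rho e1 + rho e2;
  rho_fs : forall f e, rho (fsS f e) = fsV f (rho e);
  (* rho^* is the dual of rho, via the pairing *)
  rhostar_dE : forall f e, pairing (rhostar_d f) e = vact (rho e) f;
  rho_rhostar : forall f, rho (rhostar_d f) = 0
}.

Arguments Fn {R} c.  Arguments Vf {R} c.  Arguments Sc {R} c.
Arguments vact {R} c _ _.  Arguments vbr {R} c _ _.  Arguments fsV {R} c _ _.
Arguments fsS {R} c _ _.  Arguments pairing {R} c _ _.  Arguments rho {R} c _.
Arguments rhostar_d {R} c _.

Definition pre_courant (R : realType) (C : courant_vb R)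
    (op : Sc C -> Sc C -> Sc C) : Prop :=
  [/\ bilin_map op,
      forall e1 e2, rho C (op e1 e2) = vbr C (rho C e1) (rho C e2),
      forall e1 e2, pairing C (op e1 e1) e2
                    = (2^-1 : R) *: vact C (rho C e2) (pairing C e1 e1) &
      forall e1 e2 e3, vact C (rho C e1) (pairing C e2 e3)
                       = pairing C (op e1 e2) e3 + pairing C e2 (op e1 e3)].

Definition jacobiator (R : realType) (C : courant_vb R)
    (op : Sc C -> Sc C -> Sc C) (e1 e2 e3 : Sc C) : Sc C :=
  op e1 (op e2 e3) - op (op e1 e2) e3 - op e2 (op e1 e3).

Record l2data (R : realType) := L2Data {
  V0 : lmodType R;
  V1 : lmodType R;
  dd : V1 -> V0;
  l2_00 : V0 -> V0 -> V0;
  l2_01 : V0 -> V1 -> V1;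
  l2_10 : V1 -> V0 -> V1;
  l3 : V0 -> V0 -> V0 -> V1
}.

Arguments dd {R} _.  Arguments l2_00 {R} _.  Arguments l2_01 {R} _.
Arguments l2_10 {R} _.  Arguments l3 {R} _.

Definition is_leibniz2 (R : realType) (V : l2data R) : Prop :=
  let d := dd V in let l00 := l2_00 V in let l01 := l2_01 V in
  let l10 := l2_10 V in let l3 := l3 V in
  [/\ [/\ lin_map d, bilin_map l00, bilin_map l01, bilin_map l10 & trilin_map l3],
   [/\ (forall x m, d (l01 x m) = l00 x (d m)),
       (forall m x, d (l10 m x) = l00 (d m) x) &
       (forall m n, l01 (d m) n = l10 m (d n))],
   (forall x y z, d (l3 x y z) = l00 x (l00 y z) - l00 (l00 x y) z - l00 y (l00 x z)) &
   [/\ (forall x y m, l3 x y (d m) = l01 x (l01 y m) - l01 (l00 x y) m - l01 y (l01 x m)),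
       (forall x m y, l3 x (d m) y = l01 x (l10 m y) - l10 (l01 x m) y - l10 m (l00 x y)),
       (forall m x y, l3 (d m) x y = l10 m (l00 x y) - l10 (l10 m x) y - l01 x (l10 m y)) &
       (forall w x y z,
          l01 w (l3 x y z) - l01 x (l3 w y z) + l01 y (l3 w x z) + l10 (l3 w x y) z
          - l3 (l00 w x) y z - l3 x (l00 w y) z - l3 x y (l00 w z)
          + l3 w (l00 x y) z + l3 w y (l00 x z) - l3 w x (l00 y z) = 0)]].

Definition l2_morphism (R : realType) (V W : l2data R)
    (f0 : V0 V -> V0 W) (f1 : V1 V -> V1 W) (f2 : V0 V -> V0 V -> V1 W) : Prop :=
  [/\ [/\ lin_map f0, lin_map f1 & bilin_map f2],
      (forall m, f0 (dd V m) = dd W (f1 m)),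
      [/\ (forall x y, l2_00 W (f0 x) (f0 y) - f0 (l2_00 V x y) = dd W (f2 x y)),
          (forall x m, l2_01 W (f0 x) (f1 m) - f1 (l2_01 V x m) = f2 x (dd V m)) &
          (forall m x, l2_10 W (f1 m) (f0 x) - f1 (l2_10 V m x) = f2 (dd V m) x)] &
      (forall x y z,
         f1 (l3 V x y z) + l2_01 W (f0 x) (f2 y z) - l2_01 W (f0 y) (f2 x z)
         - l2_10 W (f2 x y) (f0 z) - f2 (l2_00 V x y) z + f2 x (l2_00 V y z)
         - f2 y (l2_00 V x z) - l3 W (f0 x) (f0 y) (f0 z) = 0)].

Arguments l2_morphism {R} V W f0 f1 f2.

Definition l2_isomorphic (R : realType) (V W : l2data R) : Prop :=
  exists f0 f1 f2, l2_morphism V W f0 f1 f2 /\ bijective f0 /\ bijective f1.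

Section Kernel.
Variables (R : realType) (C : courant_vb R).

Definition kerrho : {pred Sc C} := [pred e | rho C e == 0].

Lemma rho0 : rho C 0 = 0.
Proof. by apply/eqP; rewrite -(addrI _ (_ : rho C 0 + 0 = rho C 0 + rho C 0)) // addr0 -rhoD addr0. Qed.

Lemma kerrho_closed : subsemimod_closed kerrho.
Proof.
split; first split.
- by rewrite inE rho0.
- by move=> u v; rewrite !inE rhoD => /eqP -> /eqP ->; rewrite addr0.
- move=> a v; rewrite !inE -fsSZ rho_fs => /eqP ->.
  apply/eqP; apply: (@addrI _ (fsV C a%:A 0)); rewrite -fsVDr !addr0 //.
Qed.

HB.instance Definition _ := GRing.isSubmodClosed.Build R (Sc C) kerrho kerrho_closed.

Definition KerSc := {e : Sc C | e \in kerrho}.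
HB.instance Definition _ := [isSub of KerSc for sval].
HB.instance Definition _ := [Choice of KerSc by <:].
HB.instance Definition _ := [SubChoice_isSubLmodule of KerSc by <:].
End Kernel.

(* The brackets with a section of Ker rho land in Ker rho (and so does the
   Jacobiator); [insubd 0] is the corestriction to Gamma(Ker rho), which
   agrees with [op] on these arguments. *)
Definition assoc_l2 (R : realType) (C : courant_vb R)
    (op : Sc C -> Sc C -> Sc C) : l2data R :=
  @L2Data R (Sc C) (KerSc C) val op
    (fun e k => insubd (0 : KerSc C) (op e (val k)))
    (fun k e => insubd (0 : KerSc C) (op (val k) e))
    (fun e1 e2 e3 => insubd (0 : KerSc C) (jacobiator op e1 e2 e3)).

(* Both brackets have the same anchor, rho (e1 o e2) = [rho e1, rho e2], so their
   difference takes values in Ker rho.  Hence the identity maps on Gamma(E) and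
   Gamma(Ker rho), together with f2 (e1, e2) := e1 o' e2 - e1 o e2, form a morphism
   of Leibniz 2-algebras: each compatibility condition with a bracket is the
   definition of f2, and the condition on l3 is an identity in the abelian group
   Gamma(E) once o' is expanded bilinearly. *)
From HB Require Import structures.
From mathcomp Require Import all_boot all_order all_algebra.
From mathcomp Require Import reals ring.
Set Implicit Arguments. Unset Strict Implicit. Unset Printing Implicit Defensive.
Import GRing.Theory.
Local Open Scope ring_scope.

Section LinMap.
Variables (R : realType) (U V : lmodType R).
Implicit Types f g : U -> V.

Lemma lin_mapD f x y : lin_map f -> f (x + y) = f x + f y.
Proof. by move=> fL; have := fL 1 x y; rewrite !scale1r. Qed.

Lemma lin_map0 f : lin_map f -> f 0 = 0.
Proof. by move=> fL; apply: (@addrI _ (f 0)); rewrite -lin_mapD // !addr0. Qed.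

Lemma lin_mapB f x y : lin_map f -> f (x - y) = f x - f y.
Proof.
by move=> fL; apply: (@addIr _ (f y)); rewrite -lin_mapD // !subrK.
Qed.

Lemma lin_mapB_fun f g : lin_map f -> lin_map g -> lin_map (fun x => f x - g x).
Proof. by move=> fL gL a x y; rewrite fL gL scalerBr opprD addrACA. Qed.

End LinMap.

(* Cancels [t] against [- t] in a left-nested sum. *)
Local Ltac cancel_atom t :=
  repeat rewrite (addrAC _ _ t); repeat rewrite (addrAC _ _ (- t));
  first [rewrite subrK | rewrite subrr ?add0r | rewrite addNr ?add0r | rewrite addrK].

Section CourantVB.
Variables (R : realType) (C : courant_vb R).

Lemma rhoB e1 e2 : rho C (e1 - e2) = rho C e1 - rho C e2.
Proof. by apply: (@addIr _ (rho C e2)); rewrite -rhoD !subrK. Qed.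

Lemma vact0 f : vact C 0 f = 0.
Proof. exact: lin_map0 (vact_linV f). Qed.

Lemma vactB X Y f : vact C (X - Y) f = vact C X f - vact C Y f.
Proof. exact: lin_mapB (vact_linV f). Qed.

Lemma vactfB X f g : vact C X (f - g) = vact C X f - vact C X g.
Proof. exact: lin_mapB (vact_lin X). Qed.

Lemma vbr0l X : vbr C 0 X = 0.
Proof.
by apply: vact_inj => f; rewrite vbrE !vact0 (lin_map0 (vact_lin X)) subrr.
Qed.

Lemma vbr0r X : vbr C X 0 = 0.
Proof.
by apply: vact_inj => f; rewrite vbrE !vact0 (lin_map0 (vact_lin X)) subrr.
Qed.

Lemma vbr_jacobi X Y Z :
  vbr C X (vbr C Y Z) - vbr C (vbr C X Y) Z - vbr C Y (vbr C X Z) = 0.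
Proof.
apply: vact_inj => f; rewrite !vactB vact0 !vbrE !vactfB.
ring.
Qed.

Section Bracket.
Variable op : Sc C -> Sc C -> Sc C.
Hypothesis opC : pre_courant op.

Lemma rho_bracket e1 e2 : rho C (op e1 e2) = vbr C (rho C e1) (rho C e2).
Proof. by case: opC. Qed.

Lemma bracket_kerr e k : k \in @kerrho _ C -> op e k \in @kerrho _ C.
Proof. by rewrite !inE rho_bracket => /eqP ->; rewrite vbr0r. Qed.

Lemma bracket_kerl e k : k \in @kerrho _ C -> op k e \in @kerrho _ C.
Proof. by rewrite !inE rho_bracket => /eqP ->; rewrite vbr0l. Qed.

Lemma jacobiator_ker e1 e2 e3 : jacobiator op e1 e2 e3 \in @kerrho _ C.
Proof. by rewrite inE /jacobiator !rhoB !rho_bracket vbr_jacobi. Qed.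

End Bracket.

Lemma bracket_sub_ker (op op' : Sc C -> Sc C -> Sc C) e1 e2 :
  pre_courant op -> pre_courant op' -> op' e1 e2 - op e1 e2 \in @kerrho _ C.
Proof. by move=> opC op'C; rewrite inE rhoB !rho_bracket // subrr. Qed.

Lemma jacobiator_shift (op op' : Sc C -> Sc C -> Sc C)
    (D := fun e1 e2 => op' e1 e2 - op e1 e2) x y z :
  (forall e, {morph op' e : u v / u - v}) -> (forall e, {morph op'^~ e : u v / u - v}) ->
  jacobiator op x y z + op' x (D y z) - op' y (D x z) - op' (D x y) z
  - D (op x y) z + D x (op y z) - D y (op x z) - jacobiator op' x y z = 0.
Proof.
move=> op'Br op'Bl; rewrite /D /jacobiator op'Br op'Br op'Bl.
rewrite !opprB ?opprD ?opprK !addrA.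
cancel_atom (op x (op y z)); cancel_atom (op (op x y) z); cancel_atom (op y (op x z)).
cancel_atom (op' x (op y z)); cancel_atom (op' y (op x z)); cancel_atom (op' (op x y) z).
by cancel_atom (op' x (op' y z)); cancel_atom (op' y (op' x z)); rewrite addNr.
Qed.

End CourantVB.

Section DifferenceOfBrackets.
Variables (R : realType) (C : courant_vb R) (op op' : Sc C -> Sc C -> Sc C).
Hypotheses (opC : pre_courant op) (op'C : pre_courant op').

Definition bracket_diff (e1 e2 : Sc C) : KerSc C := insubd 0 (op' e1 e2 - op e1 e2).

Lemma val_bracket_diff e1 e2 : val (bracket_diff e1 e2) = op' e1 e2 - op e1 e2.
Proof. exact/insubdK/bracket_sub_ker. Qed.

Lemma bracket_diff_bilin : bilin_map bracket_diff.
Proof.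
case: opC op'C => [[opLl opLr] _ _ _] [[op'Ll op'Lr] _ _ _].
split=> [e2|e1] a u v; apply: val_inj; rewrite raddfD /= !val_bracket_diff.
- exact: lin_mapB_fun (op'Ll e2) (opLl e2) a u v.
- exact: lin_mapB_fun (op'Lr e1) (opLr e1) a u v.
Qed.

Lemma bracket_diff_homotopy x y z :
  let E := assoc_l2 op in let E' := assoc_l2 op' in
  l3 E x y z + l2_01 E' x (bracket_diff y z) - l2_01 E' y (bracket_diff x z)
  - l2_10 E' (bracket_diff x y) z - bracket_diff (l2_00 E x y) z
  + bracket_diff x (l2_00 E y z) - bracket_diff y (l2_00 E x z)
  - l3 E' x y z = 0.
Proof.
case: op'C => [[op'Ll op'Lr] _ _ _].
rewrite /=; apply: val_inj; rewrite !(raddfD, raddfN) /= !val_bracket_diff.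
rewrite !insubdK.
- apply: jacobiator_shift => e u v; [exact: lin_mapB (op'Lr e) | exact: lin_mapB (op'Ll e)].
all: rewrite ?jacobiator_ker //.
- by rewrite bracket_kerl // bracket_sub_ker.
- by rewrite bracket_kerr // bracket_sub_ker.
- by rewrite bracket_kerr // bracket_sub_ker.
Qed.

Lemma id_bracket_diff_morphism :
  l2_morphism (assoc_l2 op) (assoc_l2 op') id id bracket_diff.
Proof.
split=> //=.
- by split=> //; exact: bracket_diff_bilin.
- split=> [x y | x m | m x]; first by rewrite val_bracket_diff.
  + apply: val_inj; rewrite raddfB /= val_bracket_diff.
    by rewrite !insubdK ?bracket_sub_ker //; apply: bracket_kerr => //; exact: valP.
  + apply: val_inj; rewrite raddfB /= val_bracket_diff.
    by rewrite !insubdK ?bracket_sub_ker //; apply: bracket_kerl => //; exact: valP.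
- exact: bracket_diff_homotopy.
Qed.

End DifferenceOfBrackets.

Theorem theorem4p6 (R : realType) (C : courant_vb R)
    (op op' : Sc C -> Sc C -> Sc C) :
  pre_courant op -> pre_courant op' ->
  l2_isomorphic (assoc_l2 op) (assoc_l2 op').
Proof.
move=> opC op'C; exists id, id, (bracket_diff op op').
by split; [exact: id_bracket_diff_morphism | split; exists id].
Qed.
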